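(* Let $S$ be a $\mathcal{C}$-semigroup with $S\ne\mathcal{C}$ and genus $g$. Then $S$ is pseudo-symmetric if and only if $2g=1+\mathcal{F}(S)$ and $F(S)/2\in\mathbb{N}^p$.
   Context: An integer cone $\mathcal{C}\subseteq\mathbb{N}^p$ is the set of integer points of a finitely generated rational cone in $\mathbb{Q}_{\ge0}^p$. A $\mathcal{C}$-semigroup is a subset $S\subseteq\mathcal{C}$ containing $0$, closed under addition, with $\mathcal{C}\setminus S$ finite; $\mathcal{H}(S)=\mathcal{C}\setminus S$, $g=g(S)=\#\mathcal{H}(S)$. A monomial order $\preceq$ on $\mathbb{N}^p$ is fixed (total order, compatible with addition, $\mathbf 0\preceq\mathbf c$ for all $\mathbf c$), and $F(S)=\max_\preceq\mathcal{H}(S)$. $\mathrm{PF}(S)=\{\mathbf x\in\mathcal{H}(S)\mid \mathbf x+(S\setminus\{0\})\subseteq S\}$; $S$ is pseudo-symmetric if $\mathrm{PF}(S)=\{F(S),F(S)/2\}$. $\mathbf x\le_{\mathcal{C}}\mathbf y$ means $\mathbf y-\mathbf x\in\mathcal{C}$; $I_S(\mathbf n)=\{\mathbf s\in S\mid \mathbf s\le_{\mathcal{C}}\mathbf n\}$. The generalized Frobenius number is $\mathcal{F}(S)=\#I_S(F(S))+g(S)$. *)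

From HB Require Import structures.
From mathcomp Require Import all_boot all_order all_algebra.
Set Implicit Arguments. Unset Strict Implicit. Unset Printing Implicit Defensive.
Import Order.TTheory GRing.Theory Num.Theory.

Definition vec (p : nat) := {ffun 'I_p -> nat}.
Definition vadd p (x y : vec p) : vec p := [ffun i => x i + y i].
Definition vzero p : vec p := [ffun => 0%N].

(* C is the set of integer points of a finitely generated rational cone
   contained in Q_{>=0}^p: there are generators G_0..G_{k-1} in Q_{>=0}^p
   such that x in N^p lies in C iff x = sum_j lam_j G_j with lam_j in Q_{>=0}. *)
Definition integer_cone p (C : vec p -> Prop) : Prop :=
  exists (k : nat) (G : 'I_k -> 'I_p -> rat),
    (forall j i, (0 <= G j i)%R) /\
    forall x : vec p, C x <->
      exists lam : 'I_k -> rat, (forall j, (0 <= lam j)%R) /\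
        forall i, ((x i)%:R = \sum_(j < k) lam j * G j i)%R.

Definition monomial_order p (le : vec p -> vec p -> Prop) : Prop :=
  [/\ (forall x, le x x) /\
      (forall x y, le x y -> le y x -> x = y),
      (forall x y z, le x y -> le y z -> le x z),
      (forall x y, le x y \/ le y x),
      (forall x y z, le x y -> le (vadd x z) (vadd y z))
    & (forall x, le (vzero p) x)].

Definition gaps p (C S : vec p -> Prop) (x : vec p) : Prop := C x /\ ~ S x.

Definition C_semigroup p (C S : vec p -> Prop) : Prop :=
  [/\ (forall x, S x -> C x),
      S (vzero p),
      (forall x y, S x -> S y -> S (vadd x y))
    & exists s : seq (vec p), forall x, gaps C S x -> x \in s].

Definition card_is p (A : vec p -> Prop) (n : nat) : Prop :=
  exists s : seq (vec p), [/\ uniq s, (forall x, x \in s <-> A x) & size s = n].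

Definition is_frobenius p (C S : vec p -> Prop) (le : vec p -> vec p -> Prop)
  (f : vec p) : Prop :=
  gaps C S f /\ forall h, gaps C S h -> le h f.

Definition PF p (C S : vec p -> Prop) (x : vec p) : Prop :=
  gaps C S x /\ forall s, S s -> s <> vzero p -> S (vadd x s).

Definition le_C p (C : vec p -> Prop) (x y : vec p) : Prop :=
  exists z, C z /\ y = vadd x z.

Definition I_S p (C S : vec p -> Prop) (n : vec p) (s : vec p) : Prop :=
  S s /\ le_C C s n.

(* S pseudo-symmetric (w.r.t. its Frobenius element f): PF(S) = {f, f/2},
   where f/2 is the element h of N^p with h + h = f. *)
Definition pseudo_symmetric p (C S : vec p -> Prop) (f : vec p) : Prop :=
  exists h : vec p, vadd h h = f /\ forall x, PF C S x <-> (x = f \/ x = h).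

From mathcomp Require Import all_boot all_order all_algebra.
From mathcomp Require Import zify ring.
From Stdlib Require Import Classical.
Set Implicit Arguments. Unset Strict Implicit. Unset Printing Implicit Defensive.
Import Order.TTheory GRing.Theory Num.Theory.

(* Write H = C \ S for the gaps, f = F(S) and I = I_S(f).  The map s |-> f - s
   sends I injectively into H, and when f = h + h with h in H, the point h is
   a gap outside its image.  Hence the "candidate list" h :: (f - I) is a
   duplicate-free list of 1 + n gaps, and 2g = 1 + (n + g) (i.e. g = 1 + n)
   says exactly that it enumerates all of H.
   - If PF(S) = {f, h}: every gap x lies below (up to a summand t in S) a
     pseudo-Frobenius element, found as a monomial-order maximum of the finite
     set {x + t gap | t in S}; the two cases y = f and y = h show that x is a
     candidate, so the count gives g = 1 + n.
   - Conversely, if the candidates are all the gaps, then f and h are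
     pseudo-Frobenius and no other candidate f - s (s in I \ {0}) is. *)

Lemma vec_ext p (x y : vec p) : (forall i, x i = y i) -> x = y.
Proof. by move=> H; apply/ffunP. Qed.

Lemma vec_at p (x y : vec p) : x = y -> forall i, x i = y i.
Proof. by move=> ->. Qed.

Lemma vaddE p (x y : vec p) i : vadd x y i = (x i + y i)%N.
Proof. by rewrite /vadd ffunE. Qed.

Lemma vzeroE p i : vzero p i = 0%N.
Proof. by rewrite /vzero ffunE. Qed.

Lemma vaddC p (x y : vec p) : vadd x y = vadd y x.
Proof. by apply: vec_ext => i; rewrite !vaddE addnC. Qed.

Lemma vaddA p (x y z : vec p) : vadd x (vadd y z) = vadd (vadd x y) z.
Proof. by apply: vec_ext => i; rewrite !vaddE addnA. Qed.

Lemma vadd0 p (x : vec p) : vadd x (vzero p) = x.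
Proof. by apply: vec_ext => i; rewrite vaddE vzeroE addn0. Qed.

Lemma vaddI p (x y z : vec p) : vadd x y = vadd x z -> y = z.
Proof.
by move=> /vec_at E; apply: vec_ext => i; move: (E i); rewrite !vaddE => /addnI.
Qed.

Lemma vadd_eq_l p (x y : vec p) : vadd x y = x -> y = vzero p.
Proof. by rewrite -{2}(vadd0 x) => /vaddI. Qed.

(* Truncated componentwise difference; x - y is exact when y <= x. *)
Definition vsub p (x y : vec p) : vec p := [ffun i => x i - y i].

Lemma vsub_add p (x z : vec p) : vsub (vadd x z) x = z.
Proof. by apply: vec_ext => i; rewrite /vsub ffunE vaddE addKn. Qed.

Lemma card_is_list p (A : vec p -> Prop) g (L : seq (vec p)) :
  card_is A g -> uniq L -> (forall x, x \in L -> A x) ->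
  size L = g <-> (forall x, A x -> x \in L).
Proof.
case=> s [us Hs <-] uL LA; split=> [sz x Ax | AL].
- have [_ E] := uniq_min_size uL (fun y yL => proj2 (Hs y) (LA y yL))
    (eq_leq (esym sz)).
  by rewrite (E x); apply/Hs.
- apply/perm_size/uniq_perm => // x.
  by apply/idP/idP => [/LA/Hs | /Hs/AL].
Qed.

Lemma list_max p (le : vec p -> vec p -> Prop) (P : vec p -> Prop)
    (l : seq (vec p)) :
  (forall x, le x x) -> (forall x y, le x y \/ le y x) ->
  (forall x y z, le x y -> le y z -> le x z) ->
  (exists2 x, x \in l & P x) ->
  exists2 y, P y & forall z, z \in l -> P z -> le z y.
Proof.
move=> refl tot trans; elim: l => [|a l IH] [x]; first by [].
have [[y Py ymax] | Nl] := classic (exists2 y, P y & forall z, z \in l -> P z -> le z y).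
- case: (classic (P a)) => [Pa|nPa] _ _.
  + case: (tot a y) => [ay|ya]; [exists y | exists a] => // z;
      rewrite in_cons => /orP [/eqP -> //|zl Pz]; last exact: trans (ymax z zl Pz) ya.
    exact: ymax.
  + exists y => // z; rewrite in_cons => /orP [/eqP -> //|]; exact: ymax.
- have nl : ~ exists2 z, z \in l & P z by move/IH.
  rewrite in_cons => /orP [/eqP -> Pa|xl Px]; last by case: nl; exists x.
  exists a => // z; rewrite in_cons => /orP [/eqP -> //|zl Pz].
  by case: nl; exists z.
Qed.

Lemma cone_add p (C : vec p -> Prop) x y :
  integer_cone C -> C x -> C y -> C (vadd x y).
Proof.
case=> k [G [G0 HC]] /HC [l1 [l10 H1]] /HC [l2 [l20 H2]].
apply/HC; exists (fun j => l1 j + l2 j)%R; split=> [j | i].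
- by rewrite addr_ge0.
- rewrite vaddE natrD H1 H2 -big_split /=.
  by apply: eq_bigr => j _; rewrite mulrDl.
Qed.

Lemma cone_half p (C : vec p -> Prop) h :
  integer_cone C -> C (vadd h h) -> C h.
Proof.
case=> k [G [G0 HC]] /HC [l [l0 H]].
apply/HC; exists (fun j => l j / 2)%R; split=> [j | i].
- by rewrite divr_ge0.
- have -> : ((h i)%:R = ((h i + h i)%N)%:R / 2 :> rat)%R by rewrite natrD; field.
  by rewrite -vaddE H mulr_suml; apply: eq_bigr => j _; rewrite mulrAC.
Qed.

Section PseudoSymmetric.

Variables (p : nat) (C S : vec p -> Prop) (le : vec p -> vec p -> Prop) (f : vec p).

Hypothesis cone : integer_cone C.
Hypothesis le_refl : forall x, le x x.
Hypothesis le_anti : forall x y, le x y -> le y x -> x = y.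
Hypothesis le_trans : forall x y z, le x y -> le y z -> le x z.
Hypothesis le_total : forall x y, le x y \/ le y x.
Hypothesis le_add : forall x y z, le x y -> le (vadd x z) (vadd y z).
Hypothesis le_zero : forall x, le (vzero p) x.
Hypothesis S_in_C : forall x, S x -> C x.
Hypothesis S0 : S (vzero p).
Hypothesis S_add : forall x y, S x -> S y -> S (vadd x y).
Hypothesis gaps_finite : exists s : seq (vec p), forall x, gaps C S x -> x \in s.
Hypothesis f_frob : is_frobenius C S le f.

Lemma le_addr y s : le y (vadd y s).
Proof. by have := le_add y (le_zero s); rewrite vaddC (vaddC s) vadd0. Qed.

Lemma gap_add x s : gaps C S x -> S s -> ~ S (vadd x s) -> gaps C S (vadd x s).
Proof. by move=> [Cx _] Ss nS; split=> //; apply: cone_add => //; apply: S_in_C. Qed.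

Lemma PF_of_max y :
  gaps C S y -> (forall s, S s -> gaps C S (vadd y s) -> le (vadd y s) y) ->
  PF C S y.
Proof.
move=> gy ymax; split=> // s Ss s0; apply: NNPP => nS.
by apply/s0/(@vadd_eq_l _ y)/le_anti; [apply: ymax; last apply: gap_add | apply: le_addr].
Qed.

Lemma frobenius_PF : PF C S f.
Proof. by case: f_frob => gf fmax; apply: PF_of_max => // s _ /fmax. Qed.

Lemma PF_above x : gaps C S x -> exists2 t, S t & PF C S (vadd x t).
Proof.
move=> gx; have [sg Hsg] := gaps_finite.
pose P y := gaps C S y /\ exists2 t, S t & y = vadd x t.
have [|y [gy [t St Ey]] ymax] := @list_max p le P sg le_refl le_total le_trans.
  by exists x; [apply: Hsg | split=> //; exists (vzero p); rewrite ?vadd0].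
subst y; exists t => //; apply: PF_of_max => // s Ss gys.
apply: ymax; first exact: Hsg.
by split=> //; exists (vadd t s); [apply: S_add | rewrite vaddA].
Qed.

(* Elements s of I_S(f) are exactly the s in S with f = s + x for some x in C;
   then x = f - s.  This makes s |-> f - s an injection of I_S(f) into C. *)
Lemma I_S_cosum s : I_S C S f s -> vadd s (vsub f s) = f /\ C (vsub f s).
Proof. by case=> _ [z [Cz ->]]; rewrite vsub_add. Qed.

Lemma I_S_of_cosum s x : S s -> C x -> vadd s x = f -> I_S C S f s.
Proof. by move=> Ss Cx E; split=> //; exists x. Qed.

Variables (sI : seq (vec p)).
Hypothesis sI_uniq : uniq sI.
Hypothesis sI_I_S : forall x, x \in sI <-> I_S C S f x.

Definition candidates (h : vec p) : seq (vec p) := h :: map (vsub f) sI.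

Lemma size_candidates h : size (candidates h) = (size sI).+1.
Proof. by rewrite /= size_map. Qed.

Lemma mem_candidates h x :
  x \in candidates h <-> x = h \/ exists2 s, I_S C S f s & vadd s x = f.
Proof.
rewrite in_cons; split=> [/orP [/eqP -> | /mapP [s /sI_I_S Is ->]] | [-> | [s Is E]]].
- by left.
- by right; exists s => //; case: (I_S_cosum Is).
- by rewrite eqxx.
- by apply/orP; right; apply/mapP; exists s; [apply/sI_I_S | rewrite -E vsub_add].
Qed.

Section Half.

Variable h : vec p.
Hypothesis h_half : vadd h h = f.

(* f/2 is a gap: it is in C because C is saturated, and not in S since f is not. *)
Lemma half_gap : gaps C S h.
Proof.
split; first by apply: (cone_half cone); rewrite h_half; case: f_frob => -[].
by move=> Sh; case: f_frob => -[_ []]; rewrite -h_half; apply: S_add.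
Qed.

Lemma candidates_gaps : uniq (candidates h) /\ forall x, x \in candidates h -> gaps C S x.
Proof.
have [_ nSh] := half_gap.
split.
- rewrite /candidates cons_uniq (map_inj_in_uniq (f := vsub f)) ?sI_uniq ?andbT.
  + apply/mapP => -[s /sI_I_S Is Ehs]; have [E _] := I_S_cosum Is.
    by apply: nSh; case: Is => Ss _; rewrite (@vaddI _ h h s) // vaddC h_half -E -Ehs.
  + move=> s1 s2 /sI_I_S /I_S_cosum [E1 _] /sI_I_S /I_S_cosum [E2 _] E.
    by apply: (@vaddI _ (vsub f s1)); rewrite vaddC E1 E vaddC E2.
- move=> x /mem_candidates [-> | [s [Ss [z [Cz Ef]]] E]]; first exact: half_gap.
  have -> : x = z by apply: (@vaddI _ s); rewrite E.
  split=> // Sz; case: f_frob => -[_ []]; rewrite Ef; exact: S_add.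
Qed.

Hypothesis PF_pair : forall x, PF C S x <-> x = f \/ x = h.

Lemma gaps_are_candidates x : gaps C S x -> x \in candidates h.
Proof.
move=> gx; have [Cx _] := gx; apply/mem_candidates.
have [t St /PF_pair [Ef | Eh]] := PF_above gx.
- by right; exists t; [apply: (I_S_of_cosum St Cx) | ]; rewrite vaddC.
- have [t0 | t0] := classic (t = vzero p); first by left; rewrite -Eh t0 vadd0.
  have Sht : S (vadd h t) by apply: (proj2 (proj2 (PF_pair h) _)) => //; right.
  have Ef : vadd (vadd h t) x = f by rewrite -h_half -{3}Eh -vaddA (vaddC t x).
  by right; exists (vadd h t) => //; apply: I_S_of_cosum Sht Cx Ef.
Qed.

End Half.

Lemma PF_of_candidates h :
  vadd h h = f -> (forall x, gaps C S x -> x \in candidates h) ->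
  forall x, PF C S x <-> x = f \/ x = h.
Proof.
move=> Eh cover x; split.
- case=> gx PFx; case/(mem_candidates h): (cover x gx) => [-> | [s [Ss _] E]].
    by right.
  have [s0 | s0] := classic (s = vzero p); first by left; rewrite -E s0 vaddC vadd0.
  by case: f_frob => -[_ []]; rewrite -E vaddC; apply: PFx.
- case=> ->; first exact: frobenius_PF.
  have gh := half_gap Eh; have [_ nSh] := gh.
  split=> // s Ss s0; apply: NNPP => nS.
  case/(mem_candidates h): (cover _ (gap_add gh Ss nS)) => [/vadd_eq_l // | [t [St _] E]].
  move: E; rewrite -Eh vaddA (vaddC t h) -vaddA => /vaddI Ets.
  by apply: nSh; rewrite -Ets; apply: S_add.
Qed.

End PseudoSymmetric.

Theorem mainTheorem7 (p : nat) (C S : vec p -> Prop)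
  (le : vec p -> vec p -> Prop) (f : vec p) (g n : nat) :
  integer_cone C -> monomial_order le -> C_semigroup C S ->
  (exists x, C x /\ ~ S x) ->
  is_frobenius C S le f ->
  card_is (gaps C S) g ->
  card_is (I_S C S f) n ->
  (pseudo_symmetric C S f <->
     (2 * g = 1 + (n + g))%N /\ exists h : vec p, vadd h h = f).
Proof.
move=> cone [[refl anti] trans tot add zero] [SC S0 Sadd fin] _ frob Hg [sI [usI HsI <-]].
have cands h (Eh : vadd h h = f) := candidates_gaps cone Sadd frob usI HsI Eh.
have exhaust h (Eh : vadd h h = f) :=
  card_is_list Hg (cands h Eh).1 (cands h Eh).2.
split.
- move=> [h [Eh HPF]]; split; last by exists h.
  suff : size (candidates f sI h) = g by rewrite size_candidates; lia.
  apply/(exhaust h Eh) => x.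
  exact: (gaps_are_candidates cone refl anti trans tot add zero SC S0 Sadd fin HsI Eh HPF).
- move=> [Egn [h Eh]]; exists h; split=> //.
  apply: (PF_of_candidates cone anti add zero SC Sadd frob HsI Eh).
  by apply/(exhaust h Eh); rewrite size_candidates; lia.
Qed.
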